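(* Let $b>0$, $p_0>0$, and let $(p_\ell)_{\ell\ge1}$ be a probability distribution on $\{1,2,\dots\}$ with $p_\ell\ell^2\to p_0$ as $\ell\to\infty$. Let $k,j\in\mathbb N$ with $k\ge j\ge2$ and let $c_0>0$. For $K>1$ and $n\ge c_0/2$ define \[R_j(K,n)=K\log(K)\,nb\sum_{\ell\ge j-1}p_\ell\,\frac{\binom{K\log(K)n+\ell-k}{\ell+1-j}}{\binom{K\log(K)n+\ell}{\ell+1}},\qquad R_j=\int_0^1u^j(1-u)^{k-j}\frac{bp_0}{u^2}\,du.\] Then $R_j(K,n)\to R_j$ as $K\to\infty$, uniformly in $n\ge c_0/2$.
   Context: Binomial coefficients with non-integer upper argument are understood in the generalized sense $\binom{x}{r}=\frac{x(x-1)\cdots(x-r+1)}{r!}$ (equivalently via Gamma functions), for real $x$ and nonnegative integer $r$. *)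

From Stdlib Require Import Reals Lra Lia.
From Coquelicot Require Import Coquelicot.
Open Scope R_scope.

Fixpoint falling (x : R) (r : nat) : R :=
  match r with
  | O => 1
  | S r' => falling x r' * (x - INR r')
  end.

Definition gbinom (x : R) (r : nat) : R := falling x r / INR (Factorial.fact r).

Definition Rj_term (b : R) (p : nat -> R) (k j : nat) (K n : R) (l : nat) : R :=
  p l * gbinom (K * ln K * n + INR l - INR k) (l + 1 - j)
      / gbinom (K * ln K * n + INR l) (l + 1).

Definition RjKn (b : R) (p : nat -> R) (k j : nat) (K n : R) : R :=
  K * ln K * n * b * Series (fun m => Rj_term b p k j K n (j - 1 + m)%nat).

Definition Rj_lim (b p0 : R) (k j : nat) : R :=
  RInt (fun u => u ^ j * (1 - u) ^ (k - j) * (b * p0 / u ^ 2)) 0 1.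

(* Write x = K log(K) n, w_l = 1/(l(l+1)) (inv_pronic l) and rho_l(x) (binom_ratio k j x l)
   for the ratio of binomial coefficients in R_j(K,n), and B(r+1, q+1) = r! q! / (r+q+1)!
   (beta_nat r q). Everything rests on the exact summation formula

     sum_(i >= 0) (i)_r / (y+i)_(r+q+2) = B(r+1, q+1) / (y-1)_(q+1),

   for falling factorials (z)_M, proved by induction on r: summation by parts against
   the telescoping identity 1/(z-1)_M - 1/(z)_M = M/(z)_(M+1) lowers r and M by one.
   Two instances give sum_(l >= j-1) w_l rho_l(x) = B(j-1, k-j+1)/x and
   sum_(l >= j-1) w_l = 1/(j-1). As B(j-1, k-j+1) = int_0^1 u^(j-2) (1-u)^(k-j) du,
   the first says that x b sum_l p0 w_l rho_l(x) = R_j exactly, hence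
   R_j(K,n) - R_j = x b sum_l (p_l - p0 w_l) rho_l(x). Since p_l = p0 w_l + o(w_l),
   the tail l >= L contributes at most d b B(j-1, k-j+1) for a given d > 0, while
   rho_l(x) = O(1/x^2) makes the finitely many l < L contribute O(1/x). *)

From Stdlib Require Import Reals Lra Lia Factorial.
From Coquelicot Require Import Coquelicot.
Open Scope R_scope.

Lemma falling_S_l (x : R) (r : nat) : falling x (S r) = x * falling (x - 1) r.
Proof.
  revert x; induction r as [|r IH]; intros x; [simpl; ring|].
  change (falling x (S (S r))) with (falling x (S r) * (x - INR (S r))).
  rewrite IH, S_INR; simpl; ring.
Qed.

Lemma falling_add (x : R) (r s : nat) :
  falling x (r + s) = falling x r * falling (x - INR r) s.
Proof.
  induction s as [|s IH]; [rewrite Nat.add_0_r; simpl; ring|].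
  rewrite Nat.add_succ_r; simpl falling; rewrite IH, plus_INR; ring.
Qed.

Lemma falling_pos (x : R) (r : nat) : INR r - 1 < x -> 0 < falling x r.
Proof.
  induction r as [|r IH]; intros Hx; simpl falling; [lra|].
  rewrite S_INR in Hx; apply Rmult_lt_0_compat; [apply IH|]; lra.
Qed.

Lemma falling_nonneg (x : R) (r : nat) : INR r - 1 <= x -> 0 <= falling x r.
Proof.
  induction r as [|r IH]; intros Hx; simpl falling; [lra|].
  rewrite S_INR in Hx; apply Rmult_le_pos; [apply IH|]; lra.
Qed.

Lemma pow_le_falling (x : R) (r : nat) :
  INR r - 1 <= x -> (x - INR r + 1) ^ r <= falling x r.
Proof.
  induction r as [|r IH]; intros Hx; cbn [falling pow]; [lra|].
  rewrite S_INR in *.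
  assert ((x - INR r) ^ r <= (x - INR r + 1) ^ r) by (apply pow_incr; lra).
  assert ((x - INR r + 1) ^ r <= falling x r) by (apply IH; lra).
  replace (x - (INR r + 1) + 1) with (x - INR r) by ring.
  rewrite Rmult_comm; apply Rmult_le_compat_r; lra.
Qed.

Lemma falling_le_pow (x : R) (r : nat) : INR r - 1 <= x -> falling x r <= x ^ r.
Proof.
  induction r as [|r IH]; intros Hx; cbn [falling pow]; [lra|].
  rewrite S_INR in Hx; pose proof (pos_INR r).
  rewrite (Rmult_comm x); apply Rmult_le_compat; [apply falling_nonneg| |apply IH|]; lra.
Qed.

Lemma falling_le_compat (x y : R) (r : nat) :
  INR r - 1 <= x -> x <= y -> falling x r <= falling y r.
Proof.
  induction r as [|r IH]; intros Hx Hxy; cbn [falling pow]; [lra|].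
  rewrite S_INR in Hx.
  apply Rmult_le_compat; [apply falling_nonneg| |apply IH|]; lra.
Qed.

Lemma falling_INR_lt (n r : nat) : (n < r)%nat -> falling (INR n) r = 0.
Proof.
  induction r as [|r IH]; intros Hnr; [lia|cbn [falling]].
  destruct (Nat.eq_dec n r) as [->|Hne]; [ring|].
  rewrite IH by lia; ring.
Qed.

Lemma falling_INR_bounds (n r : nat) : 0 <= falling (INR n) r <= INR n ^ r.
Proof.
  destruct (Nat.lt_ge_cases n r) as [Hnr|Hrn].
  - rewrite falling_INR_lt by exact Hnr.
    split; [lra|apply pow_le, pos_INR].
  - assert (INR r - 1 <= INR n) by (apply le_INR in Hrn; lra).
    split; [apply falling_nonneg|apply falling_le_pow]; lra.
Qed.

Lemma INR_fact_S (n : nat) : INR (fact (S n)) = INR (S n) * INR (fact n).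
Proof. apply mult_INR. Qed.

Lemma falling_INR_fact (n : nat) : falling (INR n) n = INR (fact n).
Proof.
  induction n as [|n IH]; [reflexivity|].
  rewrite falling_S_l, S_INR; replace (INR n + 1 - 1) with (INR n) by ring.
  rewrite IH, INR_fact_S, S_INR; ring.
Qed.

Lemma falling_succ_sub (x : R) (r : nat) :
  falling (x + 1) (S r) - falling x (S r) = INR (S r) * falling x r.
Proof.
  rewrite falling_S_l; replace (x + 1 - 1) with x by ring.
  simpl falling; rewrite S_INR; ring.
Qed.

Lemma inv_falling_sub (z : R) (M : nat) :
  INR M < z -> / falling (z - 1) M - / falling z M = INR M / falling z (S M).
Proof.
  intros Hz.
  assert (H1 : 0 < falling (z - 1) M) by (apply falling_pos; lra).
  assert (H2 : 0 < falling z M) by (apply falling_pos; lra).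
  assert (Hz0 : 0 < z) by (pose proof (pos_INR M); lra).
  pose proof (falling_S_l z M) as E1.
  change (falling z (S M)) with (falling z M * (z - INR M)) in E1 |- *.
  assert (E : falling (z - 1) M = falling z M * (z - INR M) / z)
    by (rewrite E1; field; lra).
  rewrite E; field; repeat split; lra.
Qed.

Lemma sum_n_by_parts (a u : nat -> R) (n : nat) :
  sum_n (fun i => a i * (u i - u (S i))) n
  = a O * u O + sum_n (fun i => (a (S i) - a i) * u (S i)) n - a (S n) * u (S n).
Proof.
  induction n as [|n IH]; rewrite ?sum_O, ?sum_Sn, ?IH; simpl; change plus with Rplus; ring.
Qed.

Lemma is_series_by_parts (a u : nat -> R) (T : R) :
  is_series (fun i => (a (S i) - a i) * u (S i)) T ->
  is_lim_seq (fun n => a n * u n) 0 ->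
  is_series (fun i => a i * (u i - u (S i))) (a O * u O + T).
Proof.
  intros HT Hau.
  apply (is_lim_seq_incr_1 (fun n => a n * u n)) in Hau.
  change (is_lim_seq (sum_n (fun i => a i * (u i - u (S i)))) (a O * u O + T)).
  apply (is_lim_seq_ext (fun n => a O * u O + sum_n (fun i => (a (S i) - a i) * u (S i)) n
                                  - a (S n) * u (S n))).
  { intros n; symmetry; apply sum_n_by_parts. }
  replace (a O * u O + T) with (a O * u O + T - 0) by ring.
  apply is_lim_seq_minus'; [apply is_lim_seq_plus'; [apply is_lim_seq_const|exact HT]|exact Hau].
Qed.

Lemma is_series_zero : is_series (fun _ : nat => 0) 0.
Proof.
  change (is_lim_seq (sum_n (fun _ : nat => 0)) 0).
  apply (is_lim_seq_ext (fun _ => 0)); [intros n; rewrite sum_n_const; ring|apply is_lim_seq_const].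
Qed.

Lemma is_series_shift_zeros (a : nat -> R) (n : nat) (l : R) :
  (forall i, (i < n)%nat -> a i = 0) ->
  is_series a l -> is_series (fun m => a (n + m)%nat) l.
Proof.
  intros Hz Ha; destruct n as [|n]; [exact Ha|].
  apply is_series_incr_n; [lia|].
  rewrite (sum_n_ext_loc _ (fun _ => 0)) by (intros i Hi; apply Hz; simpl; lia).
  rewrite sum_n_const, Rmult_0_r; change (plus l 0) with (l + 0); rewrite Rplus_0_r; exact Ha.
Qed.

Lemma is_lim_falling_ratio (r M : nat) (y : R) :
  (r < M)%nat -> INR M + 1 <= y ->
  is_lim_seq (fun i => falling (INR i) r / falling (y + INR i - 1) M) 0.
Proof.
  intros HrM Hy.
  apply is_lim_seq_le_le with (fun _ => 0) (fun i => / INR (S i)).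
  2: apply is_lim_seq_const.
  2: { apply (is_lim_seq_incr_1 (fun i => / INR i)).
       exact (is_lim_seq_inv _ _ is_lim_seq_INR ltac:(discriminate)). }
  intros i; rewrite S_INR; pose proof (pos_INR i) as Hi.
  destruct (falling_INR_bounds i r) as [Hf0 Hf1].
  assert (Hden : (INR i + 1) ^ S r <= falling (y + INR i - 1) M).
  { apply Rle_trans with ((INR i + 1) ^ M); [apply Rle_pow; [lra|lia]|].
    apply Rle_trans with ((y + INR i - 1 - INR M + 1) ^ M); [apply pow_incr; lra|].
    apply pow_le_falling; lra. }
  assert (Hpow : 0 < (INR i + 1) ^ r) by (apply pow_lt; lra).
  assert (INR i ^ r <= (INR i + 1) ^ r) by (apply pow_incr; lra).
  simpl pow in Hden.
  split; [apply Rmult_le_pos; [lra|apply Rlt_le, Rinv_0_lt_compat; nra]|].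
  apply Rle_trans with ((INR i + 1) ^ r / ((INR i + 1) * (INR i + 1) ^ r)).
  - unfold Rdiv; apply Rmult_le_compat; [lra|apply Rlt_le, Rinv_0_lt_compat; nra|lra|].
    apply Rinv_le_contravar; nra.
  - right; field; lra.
Qed.

Definition beta_nat (r q : nat) : R :=
  INR (fact r) * INR (fact q) / INR (fact (r + q + 1)).

Lemma beta_nat_pos (r q : nat) : 0 < beta_nat r q.
Proof.
  apply Rdiv_lt_0_compat; [apply Rmult_lt_0_compat|]; apply INR_fact_lt_0.
Qed.

Lemma beta_nat_0_l (q : nat) : beta_nat 0 q = / INR (S q).
Proof.
  unfold beta_nat; replace (0 + q + 1)%nat with (S q) by lia.
  rewrite INR_fact_S; change (INR (fact 0)) with 1; pose proof (INR_fact_lt_0 q).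
  field; split; [apply not_0_INR; lia|lra].
Qed.

Lemma beta_nat_S_l (r q : nat) :
  beta_nat (S r) q = INR (S r) / INR (r + q + 2) * beta_nat r q.
Proof.
  unfold beta_nat; replace (S r + q + 1)%nat with (S (r + q + 1)) by lia.
  replace (r + q + 2)%nat with (S (r + q + 1)) by lia.
  rewrite !INR_fact_S; pose proof (INR_fact_lt_0 (r + q + 1)).
  field; split; [lra|apply not_0_INR; lia].
Qed.

Lemma beta_nat_S_l_swap (r q : nat) :
  beta_nat (S r) q = INR (S r) / INR (S q) * beta_nat r (S q).
Proof.
  unfold beta_nat; replace (r + S q + 1)%nat with (S r + q + 1)%nat by lia.
  rewrite !INR_fact_S; pose proof (INR_fact_lt_0 (S r + q + 1)).
  field; split; [lra|apply not_0_INR; lia].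
Qed.

Lemma is_series_falling_ratio_by_parts (r M : nat) (y T : R) :
  (r < M)%nat -> INR M + 1 <= y ->
  is_series (fun i => (falling (INR (S i)) r - falling (INR i) r) / falling (y + INR i) M) T ->
  is_series (fun i => falling (INR i) r / falling (y + INR i) (S M))
            ((falling 0 r / falling (y - 1) M + T) / INR M).
Proof.
  intros HrM Hy HT.
  set (u i := / falling (y + INR i - 1) M).
  assert (HM : 0 < INR M) by (apply lt_0_INR; lia).
  assert (Hu : forall i, u i - u (S i) = INR M / falling (y + INR i) (S M)).
  { intros i; unfold u; rewrite S_INR.
    replace (y + (INR i + 1) - 1) with (y + INR i) by ring.
    apply inv_falling_sub; pose proof (pos_INR i); lra. }
  assert (Hlim : is_lim_seq (fun i => falling (INR i) r * u i) 0)
    by exact (is_lim_falling_ratio r M y HrM Hy).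
  assert (HT' : is_series (fun i => (falling (INR (S i)) r - falling (INR i) r) * u (S i)) T).
  { refine (is_series_ext _ _ _ _ HT); intros i; unfold u; rewrite S_INR.
    replace (y + (INR i + 1) - 1) with (y + INR i) by ring; reflexivity. }
  assert (H := is_series_scal_l (/ INR M) _ _ (is_series_by_parts _ _ _ HT' Hlim)).
  replace ((falling 0 r / falling (y - 1) M + T) / INR M)
    with (/ INR M * (falling (INR 0) r * u O + T))
    by (unfold u; simpl INR; rewrite Rplus_0_r; unfold Rdiv; ring).
  refine (is_series_ext _ _ _ _ H); intros i.
  change (/ INR M * (falling (INR i) r * (u i - u (S i)))
          = falling (INR i) r / falling (y + INR i) (S M)).
  rewrite Hu; field; split; [|lra].
  apply Rgt_not_eq, falling_pos; rewrite S_INR; pose proof (pos_INR i); lra.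
Qed.

Lemma is_series_falling_ratio (r q : nat) (y : R) :
  INR (r + q + 2) <= y ->
  is_series (fun i => falling (INR i) r / falling (y + INR i) (r + q + 2))
            (beta_nat r q / falling (y - 1) (q + 1)).
Proof.
  assert (Hq : INR (q + 1) <> 0) by (apply not_0_INR; lia).
  induction r as [|r IH]; intros Hy.
  - replace (0 + q + 2)%nat with (S (q + 1)) in * by lia.
    rewrite S_INR in Hy.
    assert (H0 : is_series (fun i => (falling (INR (S i)) 0 - falling (INR i) 0)
                                     / falling (y + INR i) (q + 1)) 0)
      by (refine (is_series_ext _ _ _ _ is_series_zero); intros i; simpl; unfold Rdiv; ring).
    assert (H := is_series_falling_ratio_by_parts 0 (q + 1) y 0 ltac:(lia) Hy H0).
    replace (beta_nat 0 q / falling (y - 1) (q + 1))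
      with ((falling 0 0 / falling (y - 1) (q + 1) + 0) / INR (q + 1)); [exact H|].
    rewrite beta_nat_0_l, <- (Nat.add_1_r q); simpl falling.
    field; split; [exact Hq|].
    apply Rgt_not_eq, falling_pos; lra.
  - change (S r + q + 2)%nat with (S (r + q + 2)) in *.
    assert (HM : INR (r + q + 2) + 1 <= y) by (rewrite <- S_INR; exact Hy).
    assert (HT := is_series_scal_l (INR (S r)) _ _ (IH ltac:(lra))).
    rewrite beta_nat_S_l.
    replace (INR (S r) / INR (r + q + 2) * beta_nat r q / falling (y - 1) (q + 1))
      with ((falling 0 (S r) / falling (y - 1) (r + q + 2)
             + INR (S r) * (beta_nat r q / falling (y - 1) (q + 1))) / INR (r + q + 2)).
    + apply is_series_falling_ratio_by_parts; [lia|exact HM|].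
      refine (is_series_ext _ _ _ _ HT); intros i.
      change (INR (S r) * (falling (INR i) r / falling (y + INR i) (r + q + 2))
              = (falling (INR (S i)) (S r) - falling (INR i) (S r))
                / falling (y + INR i) (r + q + 2)).
      rewrite (S_INR i), falling_succ_sub; unfold Rdiv; ring.
    + assert (0 < INR (r + q + 2)) by (apply lt_0_INR; lia).
      assert (INR (q + 1) <= INR (r + q + 2)) by (apply le_INR; lia).
      rewrite falling_S_l; field; repeat split; try lra; apply Rgt_not_eq, falling_pos; lra.
Qed.

Lemma is_RInt_beta (r q : nat) :
  is_RInt (fun u => u ^ r * (1 - u) ^ q) 0 1 (beta_nat r q).
Proof.
  revert q; induction r as [|r IH]; intros q;
    assert (Hq : 0 < INR (S q)) by (apply lt_0_INR; lia).
  - set (F u := - (1 - u) ^ S q / INR (S q)).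
    replace (beta_nat 0 q) with (minus (F 1) (F 0)).
    + apply (is_RInt_derive F (fun u => u ^ 0 * (1 - u) ^ q)).
      * intros u _; unfold F; auto_derive; [easy|].
        change (match q with O => 1 | S _ => INR q + 1 end) with (INR (S q)).
        replace (1 + - u) with (1 - u) by ring; field; lra.
      * intros u _; apply (ex_derive_continuous (V := R_NormedModule)); auto_derive; easy.
    + change (F 1 - F 0 = beta_nat 0 q); rewrite beta_nat_0_l; unfold F.
      rewrite Rminus_diag, Rminus_0_r, pow_i, pow1 by lia; field; lra.
  - set (F u := - u ^ S r * (1 - u) ^ S q / INR (S q)).
    set (c := INR (S r) / INR (S q)).
    assert (HF : is_RInt (fun u => - c * (u ^ r * (1 - u) ^ S q) + u ^ S r * (1 - u) ^ q) 0 1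
                   (minus (F 1) (F 0))).
    { apply (is_RInt_derive F).
      - intros u _; unfold F, c; auto_derive; [easy|].
        change (match q with O => 1 | S _ => INR q + 1 end) with (INR (S q)).
        change (match r with O => 1 | S _ => INR r + 1 end) with (INR (S r)).
        replace (1 + - u) with (1 - u) by ring; simpl pow; field; lra.
      - intros u _; apply (ex_derive_continuous (V := R_NormedModule)); auto_derive; easy. }
    assert (H := is_RInt_plus _ _ _ _ _ _ HF (is_RInt_scal _ _ _ c _ (IH (S q)))).
    replace (beta_nat (S r) q) with (plus (minus (F 1) (F 0)) (scal c (beta_nat r (S q)))).
    + refine (is_RInt_ext _ _ _ _ _ _ H); intros u _.
      change (- c * (u ^ r * (1 - u) ^ S q) + u ^ S r * (1 - u) ^ q
              + c * (u ^ r * (1 - u) ^ S q) = u ^ S r * (1 - u) ^ q); ring.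
    + change (F 1 - F 0 + c * beta_nat r (S q) = beta_nat (S r) q).
      rewrite beta_nat_S_l_swap; unfold F.
      rewrite Rminus_diag, !pow_i by lia; unfold c; field; lra.
Qed.

Lemma Rj_lim_eq (b p0 : R) (k j : nat) :
  (2 <= j <= k)%nat -> Rj_lim b p0 k j = b * p0 * beta_nat (j - 2) (k - j).
Proof.
  intros Hjk; unfold Rj_lim; apply is_RInt_unique.
  assert (H := is_RInt_scal _ _ _ (b * p0) _ (is_RInt_beta (j - 2) (k - j))).
  refine (is_RInt_ext _ _ _ _ _ _ H); rewrite Rmin_left, Rmax_right by lra.
  intros u Hu; change (b * p0 * (u ^ (j - 2) * (1 - u) ^ (k - j))
                       = u ^ j * (1 - u) ^ (k - j) * (b * p0 / u ^ 2)).
  replace (u ^ j) with (u ^ (j - 2) * u ^ 2) by (rewrite <- pow_add; f_equal; lia).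
  field; lra.
Qed.

Definition binom_ratio (k j : nat) (x : R) (l : nat) : R :=
  gbinom (x + INR l - INR k) (l + 1 - j) / gbinom (x + INR l) (l + 1).

Definition inv_pronic (l : nat) : R := / (INR l * INR (l + 1)).

Lemma Rj_term_eq (b : R) (p : nat -> R) (k j : nat) (K n : R) (l : nat) :
  Rj_term b p k j K n l = p l * binom_ratio k j (K * ln K * n) l.
Proof. unfold Rj_term, binom_ratio, Rdiv; ring. Qed.

Lemma binom_ratio_eq (k j : nat) (x : R) (l : nat) :
  (j <= k)%nat -> (j <= l + 1)%nat -> INR k <= x -> 0 < x ->
  binom_ratio k j x l
  = falling (INR (l + 1)) j * falling (x - 1) (k - j) / falling (x + INR l) k.
Proof.
  intros Hjk Hjl Hkx Hx; unfold binom_ratio, gbinom.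
  set (s := (l + 1 - j)%nat); set (X := x + INR l).
  assert (Hl := pos_INR l).
  assert (Hfalling : falling X (l + 1) * falling (x - 1) (k - j)
                     = falling X k * falling (X - INR k) s).
  { transitivity (falling X ((l + 1) + (k - j))).
    - rewrite (falling_add X (l + 1)); do 2 f_equal; unfold X; rewrite plus_INR; simpl; ring.
    - replace ((l + 1) + (k - j))%nat with (k + s)%nat by (unfold s; lia).
      apply falling_add. }
  assert (Hfact : INR (fact (l + 1)) = falling (INR (l + 1)) j * INR (fact s)).
  { rewrite <- !falling_INR_fact; replace (l + 1)%nat with (j + s)%nat at 2 by (unfold s; lia).
    rewrite falling_add; do 2 f_equal; unfold s; rewrite minus_INR by lia; ring. }
  assert (HX1 : 0 < falling X (l + 1))
    by (apply falling_pos; unfold X; rewrite plus_INR; simpl; lra).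
  assert (HXk : 0 < falling X k) by (apply falling_pos; unfold X; lra).
  assert (Hs := INR_fact_lt_0 s).
  assert (E : falling (X - INR k) s = falling X (l + 1) * falling (x - 1) (k - j) / falling X k)
    by (rewrite Hfalling; field; lra).
  assert (Hj : 0 < falling (INR (l + 1)) j)
    by (apply falling_pos; apply le_INR in Hjl; lra).
  rewrite E, Hfact; field; lra.
Qed.

Lemma binom_ratio_nonneg (k j : nat) (x : R) (l : nat) :
  (j <= k)%nat -> (j <= l + 1)%nat -> INR k <= x -> 0 < x -> 0 <= binom_ratio k j x l.
Proof.
  intros Hjk Hjl Hkx Hx; rewrite binom_ratio_eq by assumption.
  assert (INR j <= INR k) by (apply le_INR; exact Hjk); pose proof (pos_INR l).
  apply Rmult_le_pos; [apply Rmult_le_pos|].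
  - apply falling_INR_bounds.
  - apply falling_nonneg; rewrite minus_INR by exact Hjk; pose proof (pos_INR j); lra.
  - apply Rlt_le, Rinv_0_lt_compat, falling_pos; lra.
Qed.

Lemma binom_ratio_le (k j : nat) (x : R) (l : nat) :
  (2 <= j <= k)%nat -> (j <= l + 1)%nat -> INR k + 1 <= x ->
  binom_ratio k j x l <= INR (l + 1) ^ j / x ^ 2.
Proof.
  intros Hjk Hjl Hx.
  assert (Hj2 : 2 <= INR j) by (apply (le_INR 2); lia).
  assert (Hjl' : INR j <= INR (l + 1)) by (apply le_INR; lia).
  assert (Hkj : INR (k - j) = INR k - INR j) by (apply minus_INR; lia).
  rewrite plus_INR in Hjl'; simpl in Hjl'; pose proof (pos_INR k).
  rewrite binom_ratio_eq by (lia || lra).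
  set (X := x + INR l).
  replace (falling X k) with (falling X j * falling (X - INR j) (k - j))
    by (rewrite <- falling_add; f_equal; lia).
  destruct (falling_INR_bounds (l + 1) j) as [HA0 HA1].
  assert (HB0 : 0 <= falling (x - 1) (k - j)) by (apply falling_nonneg; lra).
  assert (HBC : falling (x - 1) (k - j) <= falling (X - INR j) (k - j))
    by (apply falling_le_compat; unfold X; lra).
  assert (HD : x ^ 2 <= falling X j).
  { apply Rle_trans with (x ^ j); [apply Rle_pow; [lra|lia]|].
    apply Rle_trans with ((X - INR j + 1) ^ j); [apply pow_incr; unfold X; lra|].
    apply pow_le_falling; unfold X; lra. }
  assert (Hx2 : 0 < x ^ 2) by (apply pow_lt; lra).
  assert (HC : 0 < falling (X - INR j) (k - j)) by (apply falling_pos; unfold X; lra).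
  apply Rle_trans with (falling (INR (l + 1)) j / falling X j).
  - unfold Rdiv; rewrite Rinv_mult.
    apply Rmult_le_reg_r with (falling X j * falling (X - INR j) (k - j)); [nra|].
    field_simplify; [nra|lra|lra].
  - unfold Rdiv; apply Rmult_le_compat; [lra|apply Rlt_le, Rinv_0_lt_compat; lra|lra|].
    apply Rinv_le_contravar; lra.
Qed.

Lemma inv_pronic_binom_ratio_eq (k j : nat) (x : R) (l : nat) :
  (2 <= j <= k)%nat -> (j <= l + 1)%nat -> INR k <= x -> 0 < x ->
  inv_pronic l * binom_ratio k j x l
  = falling (x - 1) (k - j) * (falling (INR (l - 1)) (j - 2) / falling (x + 1 + INR (l - 1)) k).
Proof.
  intros Hjk Hjl Hkx Hx; rewrite binom_ratio_eq by (lia || lra).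
  assert (El : INR l = INR (l - 1) + 1) by (rewrite minus_INR by lia; simpl; ring).
  replace j with (S (S (j - 2))) at 1 by lia.
  rewrite !falling_S_l, plus_INR, El; simpl (INR 1).
  replace (INR (l - 1) + 1 + 1 - 1 - 1) with (INR (l - 1)) by ring.
  replace (x + (INR (l - 1) + 1)) with (x + 1 + INR (l - 1)) by ring.
  assert (0 < falling (x + 1 + INR (l - 1)) k)
    by (apply falling_pos; pose proof (pos_INR (l - 1)); lra).
  unfold inv_pronic; rewrite plus_INR, El; simpl (INR 1); pose proof (pos_INR (l - 1)).
  field; lra.
Qed.

Lemma is_series_inv_pronic_binom_ratio (k j : nat) (x : R) :
  (2 <= j <= k)%nat -> INR k <= x -> 0 < x ->
  is_series (fun m => inv_pronic (j - 1 + m) * binom_ratio k j x (j - 1 + m))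
            (beta_nat (j - 2) (k - j) / x).
Proof.
  intros Hjk Hkx Hx.
  assert (H : INR (j - 2 + (k - j) + 2) <= x + 1)
    by (replace (j - 2 + (k - j) + 2)%nat with k by lia; lra).
  apply is_series_falling_ratio in H.
  replace (j - 2 + (k - j) + 2)%nat with k in H by lia.
  apply (is_series_shift_zeros _ (j - 2)) in H;
    [|intros i Hi; rewrite falling_INR_lt by exact Hi; unfold Rdiv; ring].
  apply (is_series_scal_l (falling (x - 1) (k - j))) in H.
  replace (beta_nat (j - 2) (k - j) / x)
    with (falling (x - 1) (k - j) * (beta_nat (j - 2) (k - j) / falling (x + 1 - 1) (k - j + 1))).
  - refine (is_series_ext _ _ _ _ H); intros m.
    rewrite inv_pronic_binom_ratio_eq by (lia || lra).
    replace (j - 1 + m - 1)%nat with (j - 2 + m)%nat by lia; reflexivity.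
  - replace (x + 1 - 1) with x by ring; rewrite Nat.add_1_r, falling_S_l.
    assert (0 < falling (x - 1) (k - j)).
    { apply falling_pos; rewrite minus_INR by lia.
      assert (2 <= INR j) by (apply (le_INR 2); lia); lra. }
    field; lra.
Qed.

Lemma is_series_inv_pronic (j : nat) :
  (2 <= j)%nat -> is_series (fun m => inv_pronic (j - 1 + m)) (/ (INR j - 1)).
Proof.
  intros Hj; assert (Hj2 : 2 <= INR j) by (apply (le_INR 2); lia).
  assert (H := is_series_falling_ratio 0 0 (INR j) ltac:(simpl; lra)).
  replace (/ (INR j - 1)) with (beta_nat 0 0 / falling (INR j - 1) (0 + 1))
    by (rewrite beta_nat_0_l; simpl; field; lra).
  refine (is_series_ext _ _ _ _ H); intros m; unfold inv_pronic.
  rewrite !plus_INR, minus_INR by lia; simpl; pose proof (pos_INR m).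
  field; lra.
Qed.

Lemma inv_pronic_pos (l : nat) : (1 <= l)%nat -> 0 < inv_pronic l.
Proof.
  intros Hl; assert (1 <= INR l) by (apply (le_INR 1); exact Hl).
  unfold inv_pronic; rewrite plus_INR; simpl (INR 1).
  apply Rinv_0_lt_compat, Rmult_lt_0_compat; lra.
Qed.

Lemma inv_pronic_ge (l L : nat) : (1 <= l)%nat -> (l < L)%nat -> / INR L ^ 2 <= inv_pronic l.
Proof.
  intros Hl HlL; assert (1 <= INR l) by (apply (le_INR 1); exact Hl).
  assert (INR l + 1 <= INR L) by (rewrite <- S_INR; apply le_INR; lia).
  unfold inv_pronic; rewrite plus_INR; simpl (INR 1).
  apply Rinv_le_contravar; [apply Rmult_lt_0_compat|simpl]; nra.
Qed.

Lemma eventually_abs_sub_le_inv_pronic (p : nat -> R) (p0 d : R) :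
  0 < d -> is_lim_seq (fun l => p l * INR l ^ 2) p0 ->
  exists L, forall l, (L <= l)%nat -> Rabs (p l - p0 * inv_pronic l) <= d * inv_pronic l.
Proof.
  intros Hd Hlim.
  assert (Hrel : is_lim_seq (fun l => p l * (INR l * INR (l + 1)) - p0) 0).
  { apply is_lim_seq_ext with (fun l => p l * INR l ^ 2 + p l * INR l ^ 2 * / INR l - p0).
    { intros l; destruct (Nat.eq_dec l 0) as [->|Hl]; [simpl; ring|].
      rewrite plus_INR; simpl (INR 1); field; apply not_0_INR, Hl. }
    replace (Finite 0) with (Finite (p0 + p0 * 0 - p0)) by (f_equal; ring).
    apply is_lim_seq_minus'; [apply is_lim_seq_plus'; [exact Hlim|]|apply is_lim_seq_const].
    apply is_lim_seq_mult'; [exact Hlim|].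
    exact (is_lim_seq_inv _ _ is_lim_seq_INR ltac:(discriminate)). }
  apply is_lim_seq_spec in Hrel; destruct (Hrel (mkposreal d Hd)) as [L HL].
  exists (S L); intros l Hl.
  specialize (HL l ltac:(lia)); simpl in HL; rewrite Rminus_0_r in HL.
  assert (Hw := inv_pronic_pos l ltac:(lia)).
  replace (p l - p0 * inv_pronic l) with (inv_pronic l * (p l * (INR l * INR (l + 1)) - p0)).
  - rewrite Rabs_mult, Rabs_pos_eq, Rmult_comm by lra.
    apply Rmult_le_compat_r; lra.
  - assert (0 < INR l) by (apply lt_0_INR; lia).
    unfold inv_pronic; rewrite plus_INR; simpl (INR 1); field; lra.
Qed.

Lemma finite_abs_bound (f : nat -> R) (N : nat) :
  exists E, forall l, (l < N)%nat -> Rabs (f l) <= E.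
Proof.
  induction N as [|N [E HE]]; [exists 0; lia|].
  exists (Rmax E (Rabs (f N))); intros l Hl.
  destruct (Nat.eq_dec l N) as [->|Hne]; [apply Rmax_r|].
  apply Rle_trans with E; [apply HE; lia|apply Rmax_l].
Qed.

Lemma lt_K_ln_K_n (X c0 K n : R) :
  0 < c0 -> Rmax (exp 1) (2 * X / c0) < K -> c0 / 2 <= n -> X < K * ln K * n.
Proof.
  intros Hc0 HK Hn.
  assert (HKe := Rle_lt_trans _ _ _ (Rmax_l _ _) HK).
  assert (HKX := Rle_lt_trans _ _ _ (Rmax_r _ _) HK).
  assert (HlnK : 1 < ln K)
    by (rewrite <- ln_exp at 1; apply ln_increasing; [apply exp_pos|exact HKe]).
  assert (HK0 : 0 < K) by (pose proof (exp_pos 1); lra).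
  assert (X < K * (c0 / 2)).
  { apply Rmult_lt_reg_r with (2 / c0); [apply Rdiv_lt_0_compat; lra|].
    replace (K * (c0 / 2) * (2 / c0)) with K by (field; lra).
    replace (X * (2 / c0)) with (2 * X / c0) by (field; lra); exact HKX. }
  assert (K * (c0 / 2) <= K * ln K * n) by (rewrite Rmult_assoc; apply Rmult_le_compat_l; nra).
  lra.
Qed.

Section ErrorSeries.

Variables (p : nat -> R) (p0 : R) (k j : nat) (x d E : R) (L : nat).

Let err (l : nat) : R := p l - p0 * inv_pronic l.

Hypothesis Hjk : (2 <= j <= k)%nat.
Hypothesis Hd : 0 < d.
Hypothesis Hkx : INR k + 1 <= x.
Hypothesis Htail : forall l, (L <= l)%nat -> Rabs (err l) <= d * inv_pronic l.
Hypothesis Hhead : forall l, (l < L)%nat -> Rabs (err l) <= E.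
Hypothesis HEx : E * INR L ^ (j + 2) / d <= x.

Lemma abs_err_mul_binom_ratio_le (l : nat) : (j <= l + 1)%nat ->
  Rabs (err l * binom_ratio k j x l)
  <= d * (inv_pronic l * binom_ratio k j x l) + d / x * inv_pronic l.
Proof.
  intros Hjl; pose proof (pos_INR k).
  assert (Hx : 0 < x) by lra.
  assert (Hr := binom_ratio_nonneg k j x l ltac:(lia) Hjl ltac:(lra) Hx).
  assert (Hw := inv_pronic_pos l ltac:(lia)).
  assert (Hdx : 0 < d / x) by (apply Rdiv_lt_0_compat; lra).
  rewrite Rabs_mult, (Rabs_pos_eq (binom_ratio k j x l)) by exact Hr.
  destruct (Nat.le_gt_cases L l) as [HLl|HlL].
  - assert (Rabs (err l) * binom_ratio k j x l <= d * inv_pronic l * binom_ratio k j x l)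
      by (apply Rmult_le_compat_r; [exact Hr|apply Htail, HLl]).
    assert (0 <= d / x * inv_pronic l) by (apply Rmult_le_pos; lra).
    lra.
  - assert (HL : 0 < INR L) by (apply lt_0_INR; lia).
    assert (HLj : 0 < INR L ^ j) by (apply pow_lt, HL).
    assert (Hr' : binom_ratio k j x l <= INR L ^ j / x ^ 2).
    { apply Rle_trans with (INR (l + 1) ^ j / x ^ 2); [apply binom_ratio_le; lia || lra|].
      apply Rmult_le_compat_r; [apply Rlt_le, Rinv_0_lt_compat, pow_lt, Hx|].
      apply pow_incr; split; [apply pos_INR|apply le_INR; lia]. }
    assert (H1 : Rabs (err l) * binom_ratio k j x l <= E * (INR L ^ j / x ^ 2)).
    { apply Rmult_le_compat; [apply Rabs_pos|exact Hr|apply Hhead, HlL|exact Hr']. }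
    assert (H2 : E * (INR L ^ j / x ^ 2) <= d / x * / INR L ^ 2).
    { replace (E * (INR L ^ j / x ^ 2)) with (E * INR L ^ (j + 2) / d * (d / x ^ 2 / INR L ^ 2))
        by (rewrite pow_add; field; repeat split; lra).
      replace (d / x * / INR L ^ 2) with (x * (d / x ^ 2 / INR L ^ 2)) by (field; lra).
      apply Rmult_le_compat_r; [|exact HEx].
      apply Rmult_le_pos; [apply Rdiv_le_0_compat; [lra|apply pow_lt, Hx]|].
      apply Rlt_le, Rinv_0_lt_compat, pow_lt, HL. }
    assert (H3 : d / x * / INR L ^ 2 <= d / x * inv_pronic l)
      by (apply Rmult_le_compat_l; [lra|apply inv_pronic_ge; lia]).
    assert (0 <= d * (inv_pronic l * binom_ratio k j x l))
      by (apply Rmult_le_pos; [lra|apply Rmult_le_pos; lra]).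
    lra.
Qed.

Lemma err_series_bound :
  ex_series (fun m => err (j - 1 + m) * binom_ratio k j x (j - 1 + m)) /\
  Rabs (Series (fun m => err (j - 1 + m) * binom_ratio k j x (j - 1 + m)))
  <= d / x * (beta_nat (j - 2) (k - j) + / (INR j - 1)).
Proof.
  pose proof (pos_INR k); assert (Hx : 0 < x) by lra.
  set (h m := d * (inv_pronic (j - 1 + m) * binom_ratio k j x (j - 1 + m))
              + d / x * inv_pronic (j - 1 + m)).
  assert (Hh : is_series h (d * (beta_nat (j - 2) (k - j) / x) + d / x * / (INR j - 1))).
  { apply (is_series_plus _ _ _ _
             (is_series_scal_l d _ _ (is_series_inv_pronic_binom_ratio k j x Hjk ltac:(lra) Hx))
             (is_series_scal_l (d / x) _ _ (is_series_inv_pronic j ltac:(lia)))). }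
  assert (Hbound : forall m, Rabs (err (j - 1 + m) * binom_ratio k j x (j - 1 + m)) <= h m)
    by (intros m; apply abs_err_mul_binom_ratio_le; lia).
  assert (Hexabs : ex_series (fun m => Rabs (err (j - 1 + m) * binom_ratio k j x (j - 1 + m)))).
  { apply (ex_series_le (K := R_AbsRing) (V := R_CompleteNormedModule)) with h;
      [|eexists; exact Hh].
    intros m; change (Rabs (Rabs (err (j - 1 + m) * binom_ratio k j x (j - 1 + m))) <= h m).
    rewrite Rabs_Rabsolu; apply Hbound. }
  split; [apply ex_series_Rabs, Hexabs|].
  apply Rle_trans with (1 := Series_Rabs _ Hexabs).
  apply Rle_trans with (Series h).
  - apply Series_le; [|eexists; exact Hh].
    intros m; split; [apply Rabs_pos|apply Hbound].
  - assert (2 <= INR j) by (apply (le_INR 2); lia).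
    rewrite (is_series_unique _ _ Hh); right; field; lra.
Qed.

End ErrorSeries.

Lemma RjKn_sub_Rj_lim (b p0 : R) (p : nat -> R) (k j : nat) (K n : R) :
  let x := K * ln K * n in
  (2 <= j <= k)%nat -> INR k <= x -> 0 < x ->
  ex_series (fun m => (p (j - 1 + m)%nat - p0 * inv_pronic (j - 1 + m))
                      * binom_ratio k j x (j - 1 + m)) ->
  RjKn b p k j K n - Rj_lim b p0 k j
  = x * b * Series (fun m => (p (j - 1 + m)%nat - p0 * inv_pronic (j - 1 + m))
                             * binom_ratio k j x (j - 1 + m)).
Proof.
  intros x Hjk Hkx Hx Hex.
  assert (Hw := is_series_inv_pronic_binom_ratio k j x Hjk Hkx Hx).
  unfold RjKn; fold x; rewrite Rj_lim_eq by exact Hjk.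
  rewrite (Series_ext _ (fun m => p0 * (inv_pronic (j - 1 + m) * binom_ratio k j x (j - 1 + m))
     + (p (j - 1 + m)%nat - p0 * inv_pronic (j - 1 + m)) * binom_ratio k j x (j - 1 + m)))
    by (intros m; rewrite Rj_term_eq; fold x; ring).
  rewrite Series_plus, Series_scal_l, (is_series_unique _ _ Hw); [field; lra| |exact Hex].
  eexists; exact (is_series_scal_l p0 _ _ Hw).
Qed.

Lemma abs_RjKn_sub_Rj_lim_le (b p0 : R) (p : nat -> R) (k j : nat) (K n d E : R) (L : nat) :
  0 < b -> (2 <= j <= k)%nat -> 0 < d ->
  (forall l, (L <= l)%nat -> Rabs (p l - p0 * inv_pronic l) <= d * inv_pronic l) ->
  (forall l, (l < L)%nat -> Rabs (p l - p0 * inv_pronic l) <= E) ->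
  Rmax (INR k + 1) (E * INR L ^ (j + 2) / d) < K * ln K * n ->
  Rabs (RjKn b p k j K n - Rj_lim b p0 k j) <= b * d * (beta_nat (j - 2) (k - j) + 1).
Proof.
  intros Hb Hjk Hd Htail Hhead HX.
  set (x := K * ln K * n) in *.
  assert (Hkx : INR k + 1 <= x) by (eapply Rle_trans, Rlt_le, HX; apply Rmax_l).
  assert (HEx : E * INR L ^ (j + 2) / d <= x) by (eapply Rle_trans, Rlt_le, HX; apply Rmax_r).
  assert (Hkx0 : INR k <= x) by lra.
  assert (Hx : 0 < x) by (pose proof (pos_INR k); lra).
  assert (HjR : 2 <= INR j) by (apply (le_INR 2); lia).
  destruct (err_series_bound p p0 k j x d E L Hjk Hd Hkx Htail Hhead HEx) as [Hex Hbound].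
  rewrite (RjKn_sub_Rj_lim b p0 p k j K n Hjk Hkx0 Hx Hex); fold x.
  rewrite Rabs_mult, Rabs_pos_eq by (apply Rmult_le_pos; lra).
  apply Rle_trans with (x * b * (d / x * (beta_nat (j - 2) (k - j) + / (INR j - 1)))).
  - apply Rmult_le_compat_l; [apply Rmult_le_pos; lra|exact Hbound].
  - assert (/ (INR j - 1) <= 1) by (rewrite <- Rinv_1; apply Rinv_le_contravar; lra).
    pose proof (beta_nat_pos (j - 2) (k - j)).
    replace (x * b * (d / x * (beta_nat (j - 2) (k - j) + / (INR j - 1))))
      with (b * d * (beta_nat (j - 2) (k - j) + / (INR j - 1))) by (field; lra).
    apply Rmult_le_compat_l; [apply Rmult_le_pos|]; lra.
Qed.

Theorem lemma8 (b p0 : R) (p : nat -> R) (k j : nat) (c0 : R) :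
  0 < b -> 0 < p0 ->
  (forall l : nat, (1 <= l)%nat -> 0 <= p l) ->
  is_series (fun m => p (S m)) 1 ->
  is_lim_seq (fun l => p l * INR l ^ 2) p0 ->
  (2 <= j)%nat -> (j <= k)%nat ->
  0 < c0 ->
  forall eps : R, 0 < eps ->
    exists K0 : R, 1 < K0 /\
      forall K n : R, K0 < K -> c0 / 2 <= n ->
        Rabs (RjKn b p k j K n - Rj_lim b p0 k j) < eps.
Proof.
  intros Hb Hp0 _ _ Hlim Hj Hjk Hc0 eps Heps.
  set (B := beta_nat (j - 2) (k - j)); assert (HB : 0 < B) by apply beta_nat_pos.
  set (d := eps / (2 * b * (B + 1))).
  assert (Hd : 0 < d) by (apply Rdiv_lt_0_compat; [|apply Rmult_lt_0_compat]; lra).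
  destruct (eventually_abs_sub_le_inv_pronic p p0 d Hd Hlim) as [L Htail].
  destruct (finite_abs_bound (fun l => p l - p0 * inv_pronic l) L) as [E Hhead].
  set (X := Rmax (INR k + 1) (E * INR L ^ (j + 2) / d)).
  exists (Rmax (exp 1) (2 * X / c0)); split.
  { apply Rlt_le_trans with (exp 1); [|apply Rmax_l].
    pose proof (exp_ineq1 1 ltac:(lra)); lra. }
  intros K n HK Hn.
  apply Rle_lt_trans with (b * d * (B + 1)).
  - apply (abs_RjKn_sub_Rj_lim_le b p0 p k j K n d E L); [lra|lia|lra|exact Htail|exact Hhead|].
    exact (lt_K_ln_K_n X c0 K n Hc0 HK Hn).
  - unfold d; replace (b * (eps / (2 * b * (B + 1))) * (B + 1)) with (eps / 2) by (field; lra).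
    lra.
Qed.
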